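(* Let $\Phi$ (dimension $d$), $\Psi$ (dimension $e$) be $\mathbf t$-modules over $K$, $\delta\in\mathrm{Der}(\Phi,\Psi)$, and let $0\to F\xrightarrow{i}X\xrightarrow{\pi}E\to0$ be the short exact sequence given by $\delta$, i.e. $F=\Psi$, $E=\Phi$, $X_a=\begin{bmatrix}\Phi_a&0\\ \delta(a)&\Psi_a\end{bmatrix}$, $i=\begin{bmatrix}0\\ I_e\end{bmatrix}$, $\pi=\begin{bmatrix}I_d&0\end{bmatrix}$. Let $G$ be a $\mathbf t$-module. Then: (i) there is an exact sequence of $\mathbb F_q[t]$-modules $$0\to\operatorname{Hom}_\tau(G,F)\xrightarrow{i\circ-}\operatorname{Hom}_\tau(G,X)\xrightarrow{\pi\circ-}\operatorname{Hom}_\tau(G,E)\xrightarrow{\delta\circ-}\operatorname{Ext}^1_\tau(G,F)\xrightarrow{-i\circ-}\operatorname{Ext}^1_\tau(G,X)\xrightarrow{-\pi\circ-}\operatorname{Ext}^1_\tau(G,E)\to0,$$ where $\delta\circ-$ sends $f$ to the class of the biderivation $a\mapsto\delta(a)f$, and $-i\circ-$, $-\pi\circ-$ send the class of a biderivation $\eta$ to the class of $a\mapsto -i\eta(a)$, resp. $a\mapsto-\pi\eta(a)$; (ii) there is an exact sequence of $\mathbb F_q[t]$-modules $$0\to\operatorname{Hom}_\tau(E,G)\xrightarrow{-\circ\pi}\operatorname{Hom}_\tau(X,G)\xrightarrow{-\circ i}\operatorname{Hom}_\tau(F,G)\xrightarrow{-\circ\delta}\operatorname{Ext}^1_\tau(E,G)\xrightarrow{-\circ(-\pi)}\operatorname{Ext}^1_\tau(X,G)\xrightarrow{-\circ(-i)}\operatorname{Ext}^1_\tau(F,G)\to0,$$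 where $-\circ\delta$ sends $h$ to the class of $a\mapsto h\delta(a)$, and the last two maps send the class of $\eta$ to the class of $a\mapsto-\eta(a)\pi$, resp. $a\mapsto-\eta(a)i$.
   Context: $A=\mathbb F_q[t]$, $K$ a field of characteristic $p$ with $\mathbb F_q$-algebra map $\iota:A\to K$, $\theta=\iota(t)$; $K\{\tau\}$ twisted polynomials with $\tau x=x^q\tau$. A $\mathbf t$-module of dimension $d$: $\mathbb F_q$-algebra homomorphism $\Phi:\mathbb F_q[t]\to\mathrm{Mat}_d(K\{\tau\})$ with $\Phi_t=(\theta I+N)+\sum_{i\ge1}M_i\tau^i$, $N$ nilpotent. $\operatorname{Hom}_\tau(\Psi,\Phi)$ (for $\Psi$ of dim $e$, $\Phi$ of dim $d$) is the set of $f\in\mathrm{Mat}_{d\times e}(K\{\tau\})$ with $f\Psi_t=\Phi_tf$, an $\mathbb F_q[t]$-module via $a\cdot f=\Phi_af$. $\mathrm{Der}(\Phi,\Psi)$: $\mathbb F_q$-linear $\delta:\mathbb F_q[t]\to\mathrm{Mat}_{e\times d}(K\{\tau\})$ with $\delta(ab)=\Psi_a\delta(b)+\delta(a)\Phi_b$; inner: $\delta^{(U)}(a)=U\Phi_a-\Psi_aU$; $\operatorname{Ext}^1_\tau(\Phi,\Psi)=\mathrm{Der}(\Phi,\Psi)/\mathrm{Der}_{in}(\Phi,\Psi)$ with $a*[\delta]=[\Psi_a\delta]$; this is the group (with Baer sum) of extensions $0\to\Psi\to X\to\Phi\to0$ of $\mathbf t$-modules, $[\delta]$ corresponding to $X_a=\begin{bmatrix}\Phi_a&0\\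 \delta(a)&\Psi_a\end{bmatrix}$. *)

From HB Require Import structures.
From mathcomp Require Import all_boot all_order all_algebra.
Set Implicit Arguments. Unset Strict Implicit. Unset Printing Implicit Defensive.
Import GRing.Theory.
Local Open Scope ring_scope.

(* Twisted polynomials K{tau}, tau x = x^q tau, with q = #|F| where F = F_q.  *)
(* An element  sum_i a_i tau^i  is represented by the polynomial             *)
(* sum_i a_i X^i : {poly K} (same additive group), with the twisted product. *)

Definition tmul (F : finFieldType) (K : fieldType) (p r : {poly K}) : {poly K} :=
  \sum_(i < size p) (p`_i *: 'X^i) * map_poly (fun x => x ^+ (#|F| ^ i)) r.

Definition tmulmx (F : finFieldType) (K : fieldType) (m n k : nat)
  (A : 'M[{poly K}]_(m, n)) (B : 'M[{poly K}]_(n, k)) : 'M[{poly K}]_(m, k) :=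
  \matrix_(i, j) \sum_(l < n) tmul F (A i l) (B l j).

Definition tscale (F : finFieldType) (K : fieldType) (f : {rmorphism F -> K})
  (m n : nat) (c : F) (A : 'M[{poly K}]_(m, n)) : 'M[{poly K}]_(m, n) :=
  map_mx (fun p => f c *: p) A.

(* A t-module of dimension d over K: an F_q-algebra homomorphism
   Phi : F_q[t] -> Mat_d(K{tau}) with Phi_t = (theta I + N) + sum_{i>=1} M_i tau^i,
   N nilpotent.  Here F_q[t] = {poly F}, t = 'X, theta = iota(t). *)
Definition is_tmodule (F : finFieldType) (K : fieldType) (f : {rmorphism F -> K})
  (theta : K) (d : nat) (Phi : {poly F} -> 'M[{poly K}]_d) : Prop :=
  [/\ (forall (c : F) (a b : {poly F}), Phi (c *: a + b) = tscale f c (Phi a) + Phi b),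
      Phi 1 = 1%:M,
      (forall a b : {poly F}, Phi (a * b) = tmulmx F (Phi a) (Phi b)) &
      exists N : 'M[K]_d, (exists k : nat, N ^+ k = 0) /\
        map_mx (fun p : {poly K} => p`_0) (Phi 'X) = theta%:M + N].

Definition is_thom (F : finFieldType) (K : fieldType) (e d : nat)
  (Psi : {poly F} -> 'M[{poly K}]_e) (Phi : {poly F} -> 'M[{poly K}]_d)
  (h : 'M[{poly K}]_(d, e)) : Prop :=
  tmulmx F h (Psi 'X) = tmulmx F (Phi 'X) h.

Definition is_der (F : finFieldType) (K : fieldType) (f : {rmorphism F -> K})
  (d e : nat) (Phi : {poly F} -> 'M[{poly K}]_d) (Psi : {poly F} -> 'M[{poly K}]_e)
  (delta : {poly F} -> 'M[{poly K}]_(e, d)) : Prop :=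
  (forall (c : F) (a b : {poly F}), delta (c *: a + b) = tscale f c (delta a) + delta b) /\
  (forall a b : {poly F},
      delta (a * b) = tmulmx F (Psi a) (delta b) + tmulmx F (delta a) (Phi b)).

Definition is_inner (F : finFieldType) (K : fieldType)
  (d e : nat) (Phi : {poly F} -> 'M[{poly K}]_d) (Psi : {poly F} -> 'M[{poly K}]_e)
  (delta : {poly F} -> 'M[{poly K}]_(e, d)) : Prop :=
  exists U : 'M[{poly K}]_(e, d),
    forall a, delta a = tmulmx F U (Phi a) - tmulmx F (Psi a) U.

Definition ext_tmod (F : finFieldType) (K : fieldType) (d e : nat)
  (Phi : {poly F} -> 'M[{poly K}]_d) (Psi : {poly F} -> 'M[{poly K}]_e)
  (delta : {poly F} -> 'M[{poly K}]_(e, d)) : {poly F} -> 'M[{poly K}]_(d + e) :=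
  fun a => block_mx (Phi a) 0 (delta a) (Psi a).

Definition tincl (K : fieldType) (d e : nat) : 'M[{poly K}]_(d + e, e) :=
  col_mx 0 1%:M.
Definition tproj (K : fieldType) (d e : nat) : 'M[{poly K}]_(d, d + e) :=
  row_mx 1%:M 0.

(* Modules presented as subquotients: a carrier, a membership predicate,     *)
(* an equivalence (equality of classes), the F_q[t]-action, sum and zero.   *)
Record sqmod (A : Type) := SQ {
  sq_car : Type;
  sq_mem : sq_car -> Prop;
  sq_eqv : sq_car -> sq_car -> Prop;
  sq_act : A -> sq_car -> sq_car;
  sq_add : sq_car -> sq_car -> sq_car;
  sq_zero : sq_car }.

Definition HomSQ (F : finFieldType) (K : fieldType) (m n : nat)
  (S : {poly F} -> 'M[{poly K}]_m) (T : {poly F} -> 'M[{poly K}]_n) : sqmod {poly F} :=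
  @SQ {poly F} 'M[{poly K}]_(n, m) (is_thom S T) (fun x y => x = y)
      (fun a h => tmulmx F (T a) h) +%R 0.

Definition ExtSQ (F : finFieldType) (K : fieldType) (f : {rmorphism F -> K})
  (m n : nat) (S : {poly F} -> 'M[{poly K}]_m) (T : {poly F} -> 'M[{poly K}]_n)
  : sqmod {poly F} :=
  @SQ {poly F} ({poly F} -> 'M[{poly K}]_(n, m)) (is_der f S T)
      (fun eta1 eta2 => is_inner S T (fun a => eta1 a - eta2 a))
      (fun a eta => fun b => tmulmx F (T a) (eta b))
      (fun eta1 eta2 => fun b => eta1 b + eta2 b) (fun _ => 0).

Definition sq_morph (A : Type) (M N : sqmod A) (phi : sq_car M -> sq_car N) : Prop :=
  [/\ (forall x, sq_mem x -> sq_mem (phi x)),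
      (forall x y, sq_mem x -> sq_mem y -> sq_eqv x y -> sq_eqv (phi x) (phi y)) &
      (forall a x y, sq_mem x -> sq_mem y ->
          sq_eqv (phi (sq_add (sq_act a x) y)) (sq_add (sq_act a (phi x)) (phi y)))].

Definition exact_seq6 (A : Type) (M1 M2 M3 M4 M5 M6 : sqmod A)
  (f1 : sq_car M1 -> sq_car M2) (f2 : sq_car M2 -> sq_car M3)
  (f3 : sq_car M3 -> sq_car M4) (f4 : sq_car M4 -> sq_car M5)
  (f5 : sq_car M5 -> sq_car M6) : Prop :=
  [/\ [/\ sq_morph f1, sq_morph f2, sq_morph f3, sq_morph f4 & sq_morph f5],
      (forall x, sq_mem x -> sq_eqv (f1 x) (sq_zero M2) -> sq_eqv x (sq_zero M1)),
      [/\ (forall y, sq_mem y ->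
             (sq_eqv (f2 y) (sq_zero M3) <-> exists x, sq_mem x /\ sq_eqv y (f1 x))),
          (forall y, sq_mem y ->
             (sq_eqv (f3 y) (sq_zero M4) <-> exists x, sq_mem x /\ sq_eqv y (f2 x))),
          (forall y, sq_mem y ->
             (sq_eqv (f4 y) (sq_zero M5) <-> exists x, sq_mem x /\ sq_eqv y (f3 x))) &
          (forall y, sq_mem y ->
             (sq_eqv (f5 y) (sq_zero M6) <-> exists x, sq_mem x /\ sq_eqv y (f4 x)))] &
      (forall z, sq_mem z -> exists y, sq_mem y /\ sq_eqv (f5 y) z)].

Arguments exact_seq6 {A} M1 M2 M3 M4 M5 M6 f1 f2 f3 f4 f5.

(* Everything is matrix algebra over the ring K{tau}, in which F_q acts by the
   central scalars f c; the argument works verbatim over any ring R with a central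
   copy of F_q.  A biderivation D in Der(A, B) is determined by D(t), and every
   value M of D(t) occurs: D is the lower-left block of the representation
   t |-> [[A_t, 0], [M, B_t]].  This gives uniqueness statements and the
   surjectivity at the two Ext ends.  The remaining exactness claims are diagram
   chases in the block decomposition of X = [[Phi, 0], [delta, Psi]] along
   i = [0; 1] and pi = [1, 0].  An extension class is changed by an inner
   biderivation until one of its blocks vanishes, and the connecting maps are
   F_q[t]-linear because delta(b) Phi_a - Psi_a delta(b) is symmetric in a and b. *)

From Stdlib Require Import FunctionalExtensionality.
From HB Require Import structures.
From mathcomp Require Import all_boot all_order all_algebra finfield.
Set Implicit Arguments. Unset Strict Implicit. Unset Printing Implicit Defensive.
Import GRing.Theory.
Local Open Scope ring_scope.

(* K{tau} on the carrier {poly K}; the product [tmul] only distributes because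
   f forces char K = char F, so the type depends on f. *)
Definition twisted (F : finFieldType) (K : fieldType) (f : {rmorphism F -> K}) : Type :=
  {poly K}.

Section TwistedPolynomials.
Variables (F : finFieldType) (K : fieldType) (f : {rmorphism F -> K}).

Definition frob (i : nat) (x : K) : K := x ^+ (#|F| ^ i).

Lemma pchar_nat_card_exp i : [pchar K].-nat (#|F| ^ i)%N.
Proof.
have [p pr pF] := finPcharP F; have pK := rmorph_pchar f pF.
rewrite (card_pprimeChar pF) -expnM (eq_pnat _ (pcharf_eq pK)).
by rewrite pnatX pnat_id.
Qed.

Fact frob_is_zmod_morphism i : zmod_morphism (frob i).
Proof.
by move=> x y; rewrite /frob exprDn_pchar ?exprNn_pchar ?pchar_nat_card_exp.
Qed.

Fact frob_is_monoid_morphism i : monoid_morphism (frob i).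
Proof. by split=> [|x y]; rewrite /frob ?expr1n ?exprMn. Qed.

HB.instance Definition _ i :=
  GRing.isZmodMorphism.Build K K (frob i) (frob_is_zmod_morphism i).
HB.instance Definition _ i :=
  GRing.isMonoidMorphism.Build K K (frob i) (frob_is_monoid_morphism i).

Lemma frob0 x : frob 0 x = x.
Proof. by rewrite /frob expn0 expr1. Qed.

Lemma frobD i j x : frob i (frob j x) = frob (i + j) x.
Proof. by rewrite /frob -exprM -expnD addnC. Qed.

Lemma frob_rmorph i c : frob i (f c) = f c.
Proof.
rewrite /frob -rmorphXn; congr (f _); elim: i => [|i IH]; first by rewrite expr1.
by rewrite expnSr exprM IH expf_card.
Qed.

Local Notation tm := (tmul F).
Local Notation T i := (map_poly (frob i)).

Lemma tmulE (p r : {poly K}) : tm p r = \sum_(i < size p) (p`_i *: 'X^i) * T i r.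
Proof. by []. Qed.

Lemma tmul_widen (p r : {poly K}) n : (size p <= n)%N ->
  tm p r = \sum_(i < n) (p`_i *: 'X^i) * T i r.
Proof.
move=> le_p_n; rewrite tmulE (big_ord_widen _ (fun i => (p`_i *: 'X^i) * T i r) le_p_n).
rewrite big_mkcond /=; apply: eq_bigr => i _; case: ltnP => // le_p_i.
by rewrite nth_default // scale0r mul0r.
Qed.

Lemma tmulDl (p p' r : {poly K}) : tm (p + p') r = tm p r + tm p' r.
Proof.
set n := maxn (size p) (size p').
rewrite (@tmul_widen _ _ n) ?(leq_trans (size_polyD _ _)) //.
rewrite (@tmul_widen p _ n) ?leq_maxl // (@tmul_widen p' _ n) ?leq_maxr //.
by rewrite -big_split; apply: eq_bigr => i _; rewrite coefD scalerDl mulrDl.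
Qed.

Lemma tmulDr (p r r' : {poly K}) : tm p (r + r') = tm p r + tm p r'.
Proof. by rewrite !tmulE -big_split; apply: eq_bigr => i _; rewrite rmorphD mulrDr. Qed.

Lemma tmul_suml I (s : seq I) (P : pred I) (Q : I -> {poly K}) r :
  tm (\sum_(j <- s | P j) Q j) r = \sum_(j <- s | P j) tm (Q j) r.
Proof.
apply: (big_rec2 (fun x y => tm x r = y)); first by rewrite tmulE size_poly0 big_ord0.
by move=> j x y _ <-; rewrite tmulDl.
Qed.

Lemma tmul_monomial c k r : tm (c *: 'X^k) r = c *: 'X^k * T k r.
Proof.
have le_size : (size (c *: 'X^k : {poly K}) <= k.+1)%N.
  by rewrite (leq_trans (size_scale_leq _ _)) ?size_polyXn.
rewrite (tmul_widen _ le_size) big_ord_recr /= big1 ?add0r.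
  by rewrite coefZ coefXn eqxx mulr1.
by move=> i _; rewrite coefZ coefXn ltn_eqF // mulr0 scale0r mul0r.
Qed.

Lemma map_frob_expand i (r : {poly K}) :
  T i r = \sum_(j < size r) frob i r`_j *: 'X^j.
Proof.
rewrite -{1}[r]coefK poly_def rmorph_sum /=; apply: eq_bigr => j _.
by rewrite map_polyZ /= map_polyXn.
Qed.

Lemma map_frob0 (r : {poly K}) : T 0 r = r.
Proof. by rewrite (eq_map_poly frob0) map_poly_id. Qed.

Lemma tmulC (x : K) (r : {poly K}) : tm x%:P r = x *: r.
Proof.
rewrite (@tmul_widen _ _ 1) ?size_polyC_leq1 // big_ord1 coefC /= expr0.
by rewrite map_frob0 -scalerAl mul1r.
Qed.

Lemma tmul1r (r : {poly K}) : tm 1 r = r.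
Proof. by rewrite tmulC scale1r. Qed.

Lemma tmul_rmorph (p : {poly K}) c : tm p (f c)%:P = f c *: p.
Proof.
rewrite tmulE (eq_bigr (fun i : 'I_(size p) => f c *: (p`_i *: 'X^i))).
  by rewrite -scaler_sumr -poly_def coefK.
by move=> i _; rewrite map_polyC /= frob_rmorph mulrC mul_polyC.
Qed.

Lemma tmulr1 (r : {poly K}) : tm r 1 = r.
Proof. by rewrite -polyC1 -(rmorph1 f) tmul_rmorph rmorph1 scale1r. Qed.

Lemma tmulA (p r u : {poly K}) : tm p (tm r u) = tm (tm p r) u.
Proof.
have -> : tm p r =
    \sum_(i < size p) \sum_(j < size r) (p`_i * frob i r`_j) *: 'X^(i + j).
  rewrite tmulE; apply: eq_bigr => i _; rewrite map_frob_expand mulr_sumr.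
  by apply: eq_bigr => j _; rewrite -scalerAl -scalerAr scalerA exprD.
rewrite tmul_suml [LHS]tmulE; apply: eq_bigr => i _.
rewrite tmul_suml tmulE rmorph_sum mulr_sumr; apply: eq_bigr => j _.
rewrite tmul_monomial rmorphM /= map_polyZ map_polyXn -map_poly_comp.
by rewrite (eq_map_poly (frobD i j)) -!scalerAl -!scalerAr scalerA exprD mulrA.
Qed.

Local Notation tK := (twisted f).
HB.instance Definition _ := GRing.Zmodule.on tK.
HB.instance Definition _ := GRing.Zmodule_isPzRing.Build tK
  tmulA tmul1r tmulr1 tmulDl tmulDr.

Definition tscalar (c : F) : tK := (f c)%:P.

Fact tscalar_is_zmod_morphism : zmod_morphism tscalar.
Proof. by move=> x y; rewrite /tscalar rmorphB polyCB. Qed.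

Fact tscalar_is_monoid_morphism : monoid_morphism tscalar.
Proof.
split=> [|x y]; first by rewrite /tscalar rmorph1.
by rewrite [RHS]tmulC -mul_polyC /tscalar rmorphM polyCM.
Qed.

HB.instance Definition _ :=
  GRing.isZmodMorphism.Build F tK tscalar tscalar_is_zmod_morphism.
HB.instance Definition _ :=
  GRing.isMonoidMorphism.Build F tK tscalar tscalar_is_monoid_morphism.

Lemma tscalar_central c (r : tK) : GRing.comm (tscalar c) r.
Proof. by rewrite /GRing.comm [LHS]tmulC [RHS]tmul_rmorph. Qed.

Lemma tscale_twisted m n :
  @tscale F K f m n = fun c A => tscalar c *: (A : 'M[tK]_(m, n)).
Proof.
apply: functional_extensionality => c; apply: functional_extensionality => A.
by apply/matrixP => i j; rewrite !mxE [RHS]tmulC.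
Qed.

Lemma tmulmx_twisted m n k : @tmulmx F K m n k = @mulmx tK m n k.
Proof.
apply: functional_extensionality => A; apply: functional_extensionality => B.
by apply/matrixP => i j; rewrite !mxE.
Qed.

End TwistedPolynomials.

Section Representations.
Variables (F : comNzRingType) (R : pzRingType) (sc : {rmorphism F -> R}).
Hypothesis sc_central : forall c r, GRing.comm (sc c) r.

Definition sc_linear m n (P : {poly F} -> 'M[R]_(m, n)) :=
  forall c a b, P (c *: a + b) = sc c *: P a + P b.

Definition rep n (P : {poly F} -> 'M[R]_n) :=
  [/\ sc_linear P, P 1 = 1%:M & forall a b, P (a * b) = P a *m P b].

Definition der m n (A : {poly F} -> 'M[R]_m) (B : {poly F} -> 'M[R]_n)
    (D : {poly F} -> 'M[R]_(n, m)) :=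
  sc_linear D /\ forall a b, D (a * b) = B a *m D b + D a *m A b.

Definition inner_der m n (A : {poly F} -> 'M[R]_m) (B : {poly F} -> 'M[R]_n)
    (D : {poly F} -> 'M[R]_(n, m)) :=
  exists U, forall a, D a = U *m A a - B a *m U.

Definition is_hom m n (A : {poly F} -> 'M[R]_m) (B : {poly F} -> 'M[R]_n)
    (h : 'M[R]_(n, m)) :=
  h *m A 'X = B 'X *m h.

Definition intertwines m n (A : {poly F} -> 'M[R]_m) (B : {poly F} -> 'M[R]_n)
    (h : 'M[R]_(n, m)) :=
  forall a, h *m A a = B a *m h.

Section Linear.
Variables (m n : nat) (P : {poly F} -> 'M[R]_(m, n)).
Hypothesis linP : sc_linear P.

Lemma sc_linear0 : P 0 = 0.
Proof.
have := linP 1 0 0; rewrite scale1r addr0 rmorph1 scale1r => P00.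
by apply: (@addrI _ (P 0)); rewrite addr0 -P00.
Qed.

Lemma sc_linearD a b : P (a + b) = P a + P b.
Proof. by rewrite -{1}[a]scale1r linP rmorph1 scale1r. Qed.

Lemma sc_linearZ c a : P (c *: a) = sc c *: P a.
Proof. by rewrite -[c *: a]addr0 linP sc_linear0 addr0. Qed.

Lemma sc_linearC c : P c%:P = sc c *: P 1.
Proof. by rewrite -[c%:P]mulr1 mul_polyC sc_linearZ. Qed.

End Linear.

Lemma rep_polyC n (P : {poly F} -> 'M[R]_n) c : rep P -> P c%:P = sc c *: 1%:M.
Proof. by case=> linP P1 _; rewrite sc_linearC // P1. Qed.

Lemma mulmx_scr m n p c (A : 'M[R]_(m, n)) (B : 'M[R]_(n, p)) :
  A *m (sc c *: B) = sc c *: (A *m B).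
Proof.
apply/matrixP=> i j; rewrite !mxE mulr_sumr; apply: eq_bigr => k _.
by rewrite mxE mulrA -sc_central mulrA.
Qed.

Lemma hom_intertwines m n (A : {poly F} -> 'M[R]_m) (B : {poly F} -> 'M[R]_n) h :
  rep A -> rep B -> is_hom A B h -> intertwines A B h.
Proof.
move=> rA rB hAB a; have [linA _ AM] := rA; have [linB _ BM] := rB.
elim/poly_ind: a => [|a c IH]; first by rewrite !sc_linear0 // mulmx0 mul0mx.
rewrite !sc_linearD // AM BM mulmxDr mulmxDl !rep_polyC // mulmx_scr mulmx1.
by rewrite -scalemxAl mul1mx mulmxA IH -!mulmxA hAB.
Qed.

Lemma der1 m n (A : {poly F} -> 'M[R]_m) (B : {poly F} -> 'M[R]_n) D :
  rep A -> rep B -> der A B D -> D 1 = 0.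
Proof.
move=> [_ A1 _] [_ B1 _] [_ DM]; have := DM 1 1.
rewrite mulr1 A1 B1 mul1mx mulmx1 => D11.
by apply: (@addrI _ (D 1)); rewrite addr0 -D11.
Qed.

Lemma der_eq m n (A : {poly F} -> 'M[R]_m) (B : {poly F} -> 'M[R]_n) D1 D2 :
  rep A -> rep B -> der A B D1 -> der A B D2 -> D1 'X = D2 'X -> D1 =1 D2.
Proof.
move=> rA rB dD1 dD2 D12X a.
have D1_1 := der1 rA rB dD1; have D2_1 := der1 rA rB dD2.
case: dD1 => lin1 D1M; case: dD2 => lin2 D2M.
elim/poly_ind: a => [|a c IH]; first by rewrite !sc_linear0.
by rewrite !sc_linearD // D1M D2M (sc_linearC lin1) (sc_linearC lin2) D1_1 D2_1 IH D12X.
Qed.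

Section Evaluation.
Variables (n : nat) (Y : 'M[R]_n).

(* Written out because [horner_morph] needs a nontrivial target ring, while
   'M[R]_n is the zero ring for n = 0. *)
Definition mxeval (a : {poly F}) : 'M[R]_n := \sum_(i < size a) sc a`_i *: Y ^+ i.

Lemma mxeval_widen (a : {poly F}) k : (size a <= k)%N ->
  mxeval a = \sum_(i < k) sc a`_i *: Y ^+ i.
Proof.
move=> le_a_k; rewrite /mxeval (big_ord_widen _ (fun i => sc a`_i *: Y ^+ i) le_a_k).
rewrite big_mkcond /=; apply: eq_bigr => i _; case: ltnP => // le_a_i.
by rewrite nth_default // rmorph0 scale0r.
Qed.

Lemma mxeval_linear : sc_linear mxeval.
Proof.
move=> c a b; set k := maxn (size a) (size b).
have le_a : (size a <= k)%N by rewrite leq_maxl.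
have le_b : (size b <= k)%N by rewrite leq_maxr.
have le_ab : (size (c *: a + b)%R <= k)%N.
  rewrite (leq_trans (size_polyD _ _)) // geq_max le_b andbT.
  exact: leq_trans (size_scale_leq _ _) le_a.
rewrite (mxeval_widen le_ab) (mxeval_widen le_a) (mxeval_widen le_b).
rewrite scaler_sumr -big_split; apply: eq_bigr => i _.
by rewrite coefD coefZ rmorphD rmorphM scalerDl scalerA.
Qed.

Lemma mxevalC c : mxeval c%:P = sc c *: 1%:M.
Proof. by rewrite (@mxeval_widen _ 1) ?size_polyC ?leq_b1 // big_ord1 coefC. Qed.

Lemma mxevalMX (a : {poly F}) : mxeval (a * 'X) = mxeval a *m Y.
Proof.
have le_aX : (size (a * 'X)%R <= (size a).+1)%N.
  by have [->|a0] := eqVneq a 0; rewrite ?mul0r ?size_poly0 ?size_mulX.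
rewrite (mxeval_widen le_aX) big_ord_recl coefMX rmorph0 scale0r add0r.
rewrite /mxeval mulmx_suml; apply: eq_bigr => i _.
by rewrite coefMX /= exprSr -mulmxE scalemxAl.
Qed.

Lemma mxevalM (a b : {poly F}) : mxeval (a * b) = mxeval a *m mxeval b.
Proof.
have lin := mxeval_linear.
elim/poly_ind: b => [|b c IH]; first by rewrite mulr0 sc_linear0 // mulmx0.
rewrite mulrDr mulrA !(sc_linearD lin) !mxevalMX mxevalC IH -mulmxA.
by rewrite [a * _]mulrC mul_polyC (sc_linearZ lin) mulmxDr mulmx_scr mulmx1.
Qed.

Lemma mxeval_rep : rep mxeval.
Proof.
split; [exact: mxeval_linear | | exact: mxevalM].
by rewrite -polyC1 mxevalC rmorph1 scale1r.
Qed.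

Lemma mxevalX : mxeval 'X = Y.
Proof. by rewrite -['X]mul1r mxevalMX -polyC1 mxevalC rmorph1 scale1r mul1mx. Qed.

End Evaluation.

Section Derivations.
Variables (m n : nat) (A : {poly F} -> 'M[R]_m) (B : {poly F} -> 'M[R]_n).

Definition ext_rep (D : {poly F} -> 'M[R]_(n, m)) : {poly F} -> 'M[R]_(m + n) :=
  fun a => block_mx (A a) 0 (D a) (B a).

Lemma der_ext_rep D : rep A -> rep B -> der A B D -> rep (ext_rep D).
Proof.
move=> rA rB dD; have D1 := der1 rA rB dD.
case: rA => linA A1 AM; case: rB => linB B1 BM; case: dD => linD DM.
split.
- by move=> c a b; rewrite /ext_rep linA linB linD scale_block_mx add_block_mx scaler0 addr0.
- by rewrite /ext_rep A1 B1 D1 -scalar_mx_block.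
- move=> a b; rewrite /ext_rep mulmx_block AM BM DM !mulmx0 !mul0mx !addr0 add0r.
  by rewrite addrC.
Qed.

Lemma ext_rep_der D : rep (ext_rep D) -> der A B D.
Proof.
case=> linE _ EM; split.
  move=> c a b; have := linE c a b.
  by rewrite /ext_rep scale_block_mx add_block_mx => /eq_block_mx[_ _ -> _].
move=> a b; have := EM a b.
by rewrite /ext_rep mulmx_block => /eq_block_mx[_ _ -> _]; rewrite addrC.
Qed.

Lemma der_exists (M : 'M[R]_(n, m)) : rep A -> rep B -> exists D, der A B D /\ D 'X = M.
Proof.
move=> rA rB; pose P := mxeval (block_mx (A 'X) 0 M (B 'X)).
have rP : rep P := mxeval_rep _.
have PX : P 'X = block_mx (A 'X) 0 M (B 'X) by exact: mxevalX.
have top : intertwines P A (row_mx 1%:M 0).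
  apply: hom_intertwines rP rA _.
  by rewrite /is_hom PX mul_row_block !mul1mx !mul0mx !addr0 mul_mx_row mulmx1 mulmx0.
have right : intertwines B P (col_mx 0 1%:M).
  apply: hom_intertwines rB rP _.
  by rewrite /is_hom PX mul_block_col mul_col_mx !mulmx0 !mul0mx !mulmx1 !mul1mx !add0r.
exists (fun a => dlsubmx (P a)); split; last by rewrite PX block_mxKdl.
apply: ext_rep_der; suff -> : ext_rep (fun a => dlsubmx (P a)) = P by [].
apply: functional_extensionality => a; rewrite /ext_rep.
have := top a; have := right a.
rewrite -[P a]submxK mul_row_block mul_block_col !mul1mx !mul0mx !mulmx1 !mulmx0.
rewrite !addr0 !add0r mul_mx_row mul_col_mx mulmx1 mulmx0 mul1mx mul0mx.
by move=> /eq_col_mx[<- <-] /eq_row_mx[-> _]; rewrite block_mxKdl.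
Qed.

End Derivations.

Section Closure.
Variables (m n : nat) (S : {poly F} -> 'M[R]_m) (T : {poly F} -> 'M[R]_n).
Implicit Types D : {poly F} -> 'M[R]_(n, m).

Lemma der_add D1 D2 : der S T D1 -> der S T D2 -> der S T (fun a => D1 a + D2 a).
Proof.
move=> [lin1 D1M] [lin2 D2M]; split => [c a b|a b].
  by rewrite lin1 lin2 scalerDr addrACA.
by rewrite D1M D2M mulmxDr mulmxDl addrACA.
Qed.

Lemma der_opp D : der S T D -> der S T (fun a => - D a).
Proof.
move=> [linD DM]; split => [c a b|a b]; first by rewrite linD opprD scalerN.
by rewrite DM opprD mulmxN mulNmx.
Qed.

Lemma der_inner U : rep S -> rep T -> der S T (fun a => U *m S a - T a *m U).
Proof.
move=> [linS _ SM] [linT _ TM]; split => [c a b|a b].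
  rewrite linS linT mulmxDr mulmxDl mulmx_scr -scalemxAl opprD addrACA.
  by rewrite scalerBr.
rewrite SM TM mulmxBr mulmxBl !mulmxA.
by rewrite [RHS]addrC addrA subrK.
Qed.

Lemma der_swap D : der S T D ->
  forall a b, D b *m S a - T a *m D b = D a *m S b - T b *m D a.
Proof.
move=> [_ DM] a b; have := DM b a; rewrite mulrC DM => Dab.
apply/eqP; rewrite subr_eq addrAC (addrC (D a *m S b)) Dab.
by rewrite (addrC (T b *m D a)) addrK.
Qed.

Lemma inner_der_ext D1 D2 : D1 =1 D2 -> inner_der S T D1 -> inner_der S T D2.
Proof. by move=> D12 [U HU]; exists U => a; rewrite -D12 HU. Qed.

Lemma inner_der_eq D1 D2 : D1 =1 D2 -> inner_der S T (fun a => D1 a - D2 a).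
Proof. by move=> D12; exists 0 => a; rewrite D12 subrr mul0mx mulmx0 subrr. Qed.

Lemma inner_der_opp D : inner_der S T D -> inner_der S T (fun a => - D a).
Proof.
by move=> [U HU]; exists (- U) => a; rewrite HU mulNmx mulmxN opprB opprK addrC.
Qed.

Lemma inner_der_subr0 D : inner_der S T (fun a => D a - 0) <-> inner_der S T D.
Proof. by split; apply: inner_der_ext => a; rewrite subr0. Qed.

End Closure.

Definition hom_sqmod m n (S : {poly F} -> 'M[R]_m) (T : {poly F} -> 'M[R]_n) :=
  @SQ {poly F} 'M[R]_(n, m) (is_hom S T) (fun x y => x = y)
      (fun a h => T a *m h) +%R 0.

Definition ext_sqmod m n (S : {poly F} -> 'M[R]_m) (T : {poly F} -> 'M[R]_n) :=
  @SQ {poly F} ({poly F} -> 'M[R]_(n, m)) (der S T)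
      (fun eta1 eta2 => inner_der S T (fun a => eta1 a - eta2 a))
      (fun a eta b => T a *m eta b) (fun eta1 eta2 b => eta1 b + eta2 b) (fun _ => 0).

Section Composition.
Variables (m m' n n' : nat) (S : {poly F} -> 'M[R]_m) (S' : {poly F} -> 'M[R]_m').
Variables (T : {poly F} -> 'M[R]_n) (T' : {poly F} -> 'M[R]_n').

Lemma der_lmul (L : 'M[R]_(n', n)) D :
  intertwines T T' L -> der S T D -> der S T' (fun a => L *m D a).
Proof.
move=> hL [linD DM]; split => [c a b|a b]; first by rewrite linD mulmxDr mulmx_scr.
by rewrite DM mulmxDr !mulmxA hL.
Qed.

Lemma der_rmul (L : 'M[R]_(m, m')) D :
  intertwines S' S L -> der S T D -> der S' T (fun a => D a *m L).
Proof.
move=> hL [linD DM]; split => [c a b|a b]; first by rewrite linD mulmxDl scalemxAl.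
by rewrite DM mulmxDl -!mulmxA hL.
Qed.

Lemma inner_der_lmul (L : 'M[R]_(n', n)) D :
  intertwines T T' L -> inner_der S T D -> inner_der S T' (fun a => L *m D a).
Proof. by move=> hL [U HU]; exists (L *m U) => a; rewrite HU mulmxBr !mulmxA hL. Qed.

Lemma inner_der_rmul (L : 'M[R]_(m, m')) D :
  intertwines S' S L -> inner_der S T D -> inner_der S' T (fun a => D a *m L).
Proof. by move=> hL [U HU]; exists (U *m L) => a; rewrite HU mulmxBl -!mulmxA hL. Qed.

Lemma der_lcancel (L : 'M[R]_(n', n)) (L' : 'M[R]_(n, n')) D :
  L' *m L = 1%:M -> intertwines T T' L -> der S T' (fun a => L *m D a) -> der S T D.
Proof.
move=> LL' hL [linD DM]; have DE a : D a = L' *m (L *m D a) by rewrite mulmxA LL' mul1mx.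
split => [c a b|a b]; first by rewrite DE linD mulmxDr mulmx_scr -!DE.
by rewrite DE DM mulmxDr (mulmxA (T' a)) -hL !mulmxA LL' !mul1mx.
Qed.

Lemma der_rcancel (L : 'M[R]_(m, m')) (L' : 'M[R]_(m', m)) D :
  L *m L' = 1%:M -> intertwines S' S L -> der S' T (fun a => D a *m L) -> der S T D.
Proof.
move=> LL' hL [linD DM]; have DE a : D a = D a *m L *m L' by rewrite -mulmxA LL' mulmx1.
split => [c a b|a b]; first by rewrite DE linD mulmxDl -scalemxAl -!DE.
by rewrite DE DM mulmxDl -(mulmxA (D a)) hL !mulmxA -!(mulmxA _ L) LL' !mulmx1.
Qed.



Lemma hom_lmul_morph (L : 'M[R]_(n', n)) :
  intertwines T T' L -> @sq_morph _ (hom_sqmod S T) (hom_sqmod S T') (mulmx L).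
Proof.
move=> hL; split=> [h /= hh|x y _ _ -> //|a x y _ _ /=].
  by rewrite /is_hom -mulmxA hh !mulmxA hL.
by rewrite mulmxDr !mulmxA hL.
Qed.

Lemma hom_rmul_morph (L : 'M[R]_(m, m')) :
  intertwines S' S L -> @sq_morph _ (hom_sqmod S T) (hom_sqmod S' T) (mulmx^~ L).
Proof.
move=> hL; split=> [h /= hh|x y _ _ -> //|a x y _ _ /=].
  by rewrite /is_hom -mulmxA hL mulmxA hh mulmxA.
by rewrite mulmxDl mulmxA.
Qed.

Lemma ext_lmul_morph (L : 'M[R]_(n', n)) :
  intertwines T T' L ->
  @sq_morph _ (ext_sqmod S T) (ext_sqmod S T') (fun eta a => - (L *m eta a)).
Proof.
move=> hL; split=> [eta /= deta|x y _ _ /= xy|a x y _ _ /=].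
- exact/der_opp/(der_lmul hL).
- apply: inner_der_ext (inner_der_opp (inner_der_lmul hL xy)) => a /=.
  by rewrite mulmxBr opprB opprK addrC.
- by apply: inner_der_eq => b; rewrite mulmxDr opprD mulmxN !mulmxA hL.
Qed.

Lemma ext_rmul_morph (L : 'M[R]_(m, m')) :
  intertwines S' S L ->
  @sq_morph _ (ext_sqmod S T) (ext_sqmod S' T) (fun eta a => - (eta a *m L)).
Proof.
move=> hL; split=> [eta /= deta|x y _ _ /= xy|a x y _ _ /=].
- exact/der_opp/(der_rmul hL).
- apply: inner_der_ext (inner_der_opp (inner_der_rmul hL xy)) => a /=.
  by rewrite mulmxBl opprB opprK addrC.
- by apply: inner_der_eq => b; rewrite mulmxDl opprD mulmxN !mulmxA.
Qed.

End Composition.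

Section Extension.
Variables (d e g : nat) (Phi : {poly F} -> 'M[R]_d) (Psi : {poly F} -> 'M[R]_e).
Variables (G : {poly F} -> 'M[R]_g) (delta : {poly F} -> 'M[R]_(e, d)).
Hypotheses (rPhi : rep Phi) (rPsi : rep Psi) (rG : rep G) (ddelta : der Phi Psi delta).

Local Notation X := (ext_rep Phi Psi delta).
Local Notation i := (col_mx 0 1%:M : 'M[R]_(d + e, e)).
Local Notation pi := (row_mx 1%:M 0 : 'M[R]_(d, d + e)).

Lemma rep_ext : rep X. Proof. exact: der_ext_rep. Qed.

Lemma incl_intertwines : intertwines Psi X i.
Proof. by move=> a; rewrite mul_block_col mul_col_mx !mulmx0 !mul0mx mulmx1 mul1mx !add0r. Qed.

Lemma proj_intertwines : intertwines X Phi pi.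
Proof. by move=> a; rewrite mul_row_block mul_mx_row !mulmx0 !mul0mx mulmx1 mul1mx !addr0. Qed.

Lemma proj_incl : pi *m i = 0.
Proof. by rewrite mul_row_col mulmx0 mul0mx addr0. Qed.

Lemma incl_mul k (h : 'M[R]_(e, k)) : i *m h = col_mx 0 h.
Proof. by rewrite mul_col_mx mul0mx mul1mx. Qed.

Lemma proj_mul k (y : 'M[R]_(d + e, k)) : pi *m y = usubmx y.
Proof. by rewrite -{1}[y]vsubmxK mul_row_col mul1mx mul0mx addr0. Qed.

Lemma ext_mul a k (y : 'M[R]_(d + e, k)) :
  X a *m y = col_mx (Phi a *m usubmx y) (delta a *m usubmx y + Psi a *m dsubmx y).
Proof. by rewrite -{1}[y]vsubmxK mul_block_col mul0mx addr0. Qed.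

Lemma into_extP k (S : {poly F} -> 'M[R]_k) (y : 'M[R]_(d + e, k)) a :
  y *m S a = X a *m y <->
  usubmx y *m S a = Phi a *m usubmx y /\
  dsubmx y *m S a = delta a *m usubmx y + Psi a *m dsubmx y.
Proof.
rewrite ext_mul -{1}[y]vsubmxK mul_col_mx.
by split => [/eq_col_mx//|[-> ->]].
Qed.

Lemma connecting_l_morph :
  @sq_morph _ (hom_sqmod G Phi) (ext_sqmod G Psi) (fun h a => delta a *m h).
Proof.
split=> [h /= hh|x y _ _ -> /=|a x y /= hx _]; last 2 first.
- exact: inner_der_eq.
- exists (delta a *m x) => b; rewrite mulmxDr opprD addrACA subrr addr0 !mulmxA.
  rewrite -mulmxBl (der_swap ddelta) mulmxBl -mulmxA -(hom_intertwines rG rPhi hx).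
  by rewrite !mulmxA.
exact: der_rmul (hom_intertwines rG rPhi hh) ddelta.
Qed.

Lemma incl_mul_inj (x : 'M[R]_(e, g)) : i *m x = 0 -> x = 0.
Proof. by rewrite incl_mul -col_mx0 => /eq_col_mx[]. Qed.

Lemma ker_proj_hom_l y : is_hom G X y ->
  pi *m y = 0 <-> exists x, is_hom G Psi x /\ y = i *m x.
Proof.
move=> /into_extP[_ hy]; rewrite proj_mul.
split=> [y1_0|[x [_ ->]]]; last by rewrite -proj_mul mulmxA proj_incl mul0mx.
exists (dsubmx y); split; first by rewrite /is_hom hy y1_0 mulmx0 add0r.
by rewrite incl_mul -y1_0 vsubmxK.
Qed.

Lemma ker_connecting_l h : is_hom G Phi h ->
  inner_der G Psi (fun a => delta a *m h) <-> exists k, is_hom G X k /\ h = pi *m k.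
Proof.
move=> hh; split=> [[U hU]|[k [hk ->]]].
  exists (col_mx h U); rewrite proj_mul col_mxKu; split => //.
  by apply/into_extP; rewrite col_mxKu col_mxKd hU subrK.
exists (dsubmx k) => a; rewrite proj_mul.
have /into_extP[_ ->] := hom_intertwines rG rep_ext hk a.
by rewrite addrK.
Qed.

Lemma ker_incl_ext_l eta :
  inner_der G X (fun a => - (i *m eta a)) <->
  exists h, is_hom G Phi h /\ inner_der G Psi (fun a => eta a - delta a *m h).
Proof.
split=> [[V hV]|[h [hh [U hU]]]].
  have hVa a : 0 = usubmx V *m G a - Phi a *m usubmx V /\
      - eta a = dsubmx V *m G a - (delta a *m usubmx V + Psi a *m dsubmx V).
    apply/eq_col_mx; have := hV a.
    by rewrite -mulmxN incl_mul ext_mul -{1}[V]vsubmxK mul_col_mx opp_col_mx add_col_mx.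
  exists (usubmx V); split.
    by apply/eqP; rewrite -subr_eq0 -(hVa 'X).1.
  exists (- dsubmx V) => a; rewrite -[eta a]opprK (hVa a).2 opprB addrAC.
  by rewrite [delta a *m _ + _]addrC addrK mulNmx mulmxN opprK addrC.
exists (col_mx h (- U)) => a.
rewrite -mulmxN incl_mul ext_mul col_mxKu col_mxKd mul_col_mx.
rewrite (hom_intertwines rG rPhi hh) opp_col_mx add_col_mx subrr; congr col_mx.
rewrite -[eta a](subrK (delta a *m h)) hU mulNmx mulmxN.
by rewrite opprD !opprB addrA (addrC (Psi a *m U)).
Qed.

Lemma ker_proj_ext_l xi : der G X xi ->
  inner_der G Phi (fun a => - (pi *m xi a)) <->
  exists eta, der G Psi eta /\ inner_der G X (fun a => xi a - - (i *m eta a)).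
Proof.
move=> dxi; split=> [[U hU]|[eta [_ hxi]]]; last first.
  apply: inner_der_ext (inner_der_opp (inner_der_lmul proj_intertwines hxi)) => a.
  by rewrite mulmxBr mulmxN mulmxA proj_incl mul0mx oppr0 subr0.
(* Subtracting the inner biderivation of V kills the Phi-block of xi. *)
pose V := col_mx (- U) 0 : 'M[R]_(d + e, g).
pose xi' a := xi a - (V *m G a - X a *m V).
have dxi' : der G X xi' := der_add dxi (der_opp (der_inner V rG rep_ext)).
have xi'E : xi' = fun a => i *m dsubmx (xi' a).
  apply: functional_extensionality => a; rewrite incl_mul -[LHS]vsubmxK; congr col_mx.
  rewrite -proj_mul /xi' !mulmxBr !mulmxA proj_intertwines -(mulmxA (Phi a)) [pi *m V]proj_mul.
  rewrite col_mxKu -[pi *m xi a]opprK hU mulNmx mulmxN.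
  by rewrite opprK opprB [- _ + _]addrC subrr.
have dD : der G Psi (fun a => dsubmx (xi' a)).
  apply: (der_lcancel (L' := row_mx 0 1%:M) _ incl_intertwines); last by rewrite -xi'E.
  by rewrite mul_row_col mul0mx mul1mx add0r.
exists (fun a => - dsubmx (xi' a)); split; first exact: der_opp.
exists V => a; rewrite mulmxN opprK -(congr1 (@^~ a) xi'E) /xi'.
by rewrite opprB addrC subrK.
Qed.

Lemma proj_ext_surj_l eta : der G Phi eta ->
  exists xi, der G X xi /\ inner_der G Phi (fun a => - (pi *m xi a) - eta a).
Proof.
move=> deta; have [xi [dxi xiX]] := der_exists (col_mx (- eta 'X) 0) rG rep_ext.
exists xi; split => //; apply: inner_der_eq; apply: der_eq rG rPhi _ deta _.
  exact/der_opp/(der_lmul proj_intertwines).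
by rewrite /= xiX proj_mul col_mxKu opprK.
Qed.

Theorem exact_hom_ext_covariant :
  exact_seq6 (hom_sqmod G Psi) (hom_sqmod G X) (hom_sqmod G Phi)
             (ext_sqmod G Psi) (ext_sqmod G X) (ext_sqmod G Phi)
    (mulmx i) (mulmx pi) (fun h a => delta a *m h)
    (fun eta a => - (i *m eta a)) (fun eta a => - (pi *m eta a)).
Proof.
split.
- split; [exact: hom_lmul_morph incl_intertwines | exact: hom_lmul_morph proj_intertwines
  | exact: connecting_l_morph | exact: ext_lmul_morph incl_intertwines
  | exact: ext_lmul_morph proj_intertwines].
- by move=> x _; apply: incl_mul_inj.
- split=> [y /ker_proj_hom_l // | h hh | eta _ | xi dxi].
  + exact: iff_trans (inner_der_subr0 _ _ _) (ker_connecting_l hh).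
  + exact: iff_trans (inner_der_subr0 _ _ _) (ker_incl_ext_l eta).
  + exact: iff_trans (inner_der_subr0 _ _ _) (ker_proj_ext_l dxi).
- exact: proj_ext_surj_l.
Qed.

Lemma mul_proj k (h : 'M[R]_(k, d)) : h *m pi = row_mx h 0.
Proof. by rewrite mul_mx_row mulmx1 mulmx0. Qed.

Lemma mul_incl k (y : 'M[R]_(k, d + e)) : y *m i = rsubmx y.
Proof. by rewrite -{1}[y]hsubmxK mul_row_col mulmx0 add0r mulmx1. Qed.

Lemma mul_ext a k (y : 'M[R]_(k, d + e)) :
  y *m X a = row_mx (lsubmx y *m Phi a + rsubmx y *m delta a) (rsubmx y *m Psi a).
Proof. by rewrite -{1}[y]hsubmxK mul_row_block mulmx0 add0r. Qed.

Lemma from_extP k (S : {poly F} -> 'M[R]_k) (y : 'M[R]_(k, d + e)) a :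
  y *m X a = S a *m y <->
  lsubmx y *m Phi a + rsubmx y *m delta a = S a *m lsubmx y /\
  rsubmx y *m Psi a = S a *m rsubmx y.
Proof.
rewrite mul_ext -[y in S a *m y]hsubmxK mul_mx_row.
by split => [/eq_row_mx//|[-> ->]].
Qed.

Lemma connecting_r_morph :
  @sq_morph _ (hom_sqmod Psi G) (ext_sqmod Phi G) (fun h a => h *m delta a).
Proof.
split=> [h /= hh|x y _ _ -> /=|a x y _ _ /=]; last 2 first.
- exact: inner_der_eq.
- by apply: inner_der_eq => b; rewrite mulmxDl mulmxA.
exact: der_lmul (hom_intertwines rPsi rG hh) ddelta.
Qed.

Lemma mul_proj_inj (x : 'M[R]_(g, d)) : x *m pi = 0 -> x = 0.
Proof. by rewrite mul_proj -row_mx0 => /eq_row_mx[]. Qed.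

Lemma ker_incl_hom_r y : is_hom X G y ->
  y *m i = 0 <-> exists x, is_hom Phi G x /\ y = x *m pi.
Proof.
move=> /from_extP[hy _]; rewrite mul_incl.
split=> [y2_0|[x [_ ->]]]; last by rewrite -mul_incl -mulmxA proj_incl mulmx0.
exists (lsubmx y); split; first by rewrite /is_hom -hy y2_0 mul0mx addr0.
by rewrite mul_proj -y2_0 hsubmxK.
Qed.

Lemma ker_connecting_r h : is_hom Psi G h ->
  inner_der Phi G (fun a => h *m delta a) <-> exists k, is_hom X G k /\ h = k *m i.
Proof.
move=> hh; split=> [[U hU]|[k [hk ->]]].
  exists (row_mx (- U) h); rewrite mul_incl row_mxKr; split => //.
  apply/from_extP; rewrite row_mxKl row_mxKr hU mulNmx mulmxN.
  by rewrite addrA addNr add0r.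
exists (- lsubmx k) => a; rewrite mul_incl.
have /from_extP[hka _] := hom_intertwines rep_ext rG hk a.
by rewrite -[rsubmx k *m _](addKr (lsubmx k *m Phi a)) hka mulNmx mulmxN opprK addrC.
Qed.

Lemma ker_proj_ext_r eta :
  inner_der X G (fun a => - (eta a *m pi)) <->
  exists h, is_hom Psi G h /\ inner_der Phi G (fun a => eta a - h *m delta a).
Proof.
split=> [[V hV]|[h [hh [U hU]]]].
  have hVa a : - eta a = lsubmx V *m Phi a + rsubmx V *m delta a - G a *m lsubmx V /\
      0 = rsubmx V *m Psi a - G a *m rsubmx V.
    apply/eq_row_mx; have := hV a.
    rewrite -mulNmx mul_proj mul_ext -[V in G a *m V]hsubmxK mul_mx_row.
    by rewrite opp_row_mx add_row_mx.
  exists (- rsubmx V); split.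
    by apply/eqP; rewrite mulNmx mulmxN eqr_opp -subr_eq0 -(hVa 'X).2.
  exists (- lsubmx V) => a; rewrite -[eta a]opprK (hVa a).1 !mulNmx mulmxN !opprK.
  by rewrite !opprD opprK addrAC addrNK.
exists (row_mx (- U) (- h)) => a.
rewrite -mulNmx mul_proj mul_ext row_mxKl row_mxKr mul_mx_row !mulNmx !mulmxN.
rewrite (hom_intertwines rPsi rG hh) opp_row_mx add_row_mx subrr; congr row_mx.
by rewrite -[eta a](subrK (h *m delta a)) hU opprK !opprD opprK addrAC.
Qed.

Lemma ker_incl_ext_r xi : der X G xi ->
  inner_der Psi G (fun a => - (xi a *m i)) <->
  exists eta, der Phi G eta /\ inner_der X G (fun a => xi a - - (eta a *m pi)).
Proof.
move=> dxi; split=> [[U hU]|[eta [_ hxi]]]; last first.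
  apply: inner_der_ext (inner_der_opp (inner_der_rmul incl_intertwines hxi)) => a.
  by rewrite mulmxBl mulNmx -mulmxA proj_incl mulmx0 oppr0 subr0.
(* Subtracting the inner biderivation of V kills the Psi-block of xi. *)
pose V := row_mx 0 (- U) : 'M[R]_(g, d + e).
pose xi' a := xi a - (V *m X a - G a *m V).
have dxi' : der X G xi' := der_add dxi (der_opp (der_inner V rep_ext rG)).
have xi'E : xi' = fun a => lsubmx (xi' a) *m pi.
  apply: functional_extensionality => a; rewrite mul_proj -[LHS]hsubmxK; congr row_mx.
  rewrite -mul_incl /xi' !mulmxBl -!mulmxA -incl_intertwines mulmxA [V *m i]mul_incl.
  rewrite row_mxKr -[xi a *m i]opprK hU mulNmx mulmxN.
  by rewrite opprK opprB [- _ + _]addrC subrr.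
have dD : der Phi G (fun a => lsubmx (xi' a)).
  apply: (der_rcancel (L' := col_mx 1%:M 0) _ proj_intertwines); last by rewrite -xi'E.
  by rewrite mul_row_col mul1mx mul0mx addr0.
exists (fun a => - lsubmx (xi' a)); split; first exact: der_opp.
exists V => a; rewrite mulNmx opprK -(congr1 (@^~ a) xi'E) /xi'.
by rewrite opprB addrC subrK.
Qed.

Lemma incl_ext_surj_r eta : der Psi G eta ->
  exists xi, der X G xi /\ inner_der Psi G (fun a => - (xi a *m i) - eta a).
Proof.
move=> deta; have [xi [dxi xiX]] := der_exists (row_mx 0 (- eta 'X)) rep_ext rG.
exists xi; split => //; apply: inner_der_eq; apply: der_eq rPsi rG _ deta _.
  exact/der_opp/(der_rmul incl_intertwines).
by rewrite /= xiX mul_incl row_mxKr opprK.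
Qed.

Theorem exact_hom_ext_contravariant :
  exact_seq6 (hom_sqmod Phi G) (hom_sqmod X G) (hom_sqmod Psi G)
             (ext_sqmod Phi G) (ext_sqmod X G) (ext_sqmod Psi G)
    (mulmx^~ pi) (mulmx^~ i) (fun h a => h *m delta a)
    (fun eta a => - (eta a *m pi)) (fun eta a => - (eta a *m i)).
Proof.
split.
- split; [exact: hom_rmul_morph proj_intertwines | exact: hom_rmul_morph incl_intertwines
  | exact: connecting_r_morph | exact: ext_rmul_morph proj_intertwines
  | exact: ext_rmul_morph incl_intertwines].
- by move=> x _; apply: mul_proj_inj.
- split=> [y /ker_incl_hom_r // | h hh | eta _ | xi dxi].
  + exact: iff_trans (inner_der_subr0 _ _ _) (ker_connecting_r hh).
  + exact: iff_trans (inner_der_subr0 _ _ _) (ker_proj_ext_r eta).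
  + exact: iff_trans (inner_der_subr0 _ _ _) (ker_incl_ext_r dxi).
- exact: incl_ext_surj_r.
Qed.

End Extension.
End Representations.

Section Transfer.
Variables (F : finFieldType) (K : fieldType) (f : {rmorphism F -> K}).

Lemma rep_twisted theta n (P : {poly F} -> 'M[{poly K}]_n) :
  is_tmodule f theta P -> rep (tscalar f) (P : {poly F} -> 'M[twisted f]_n).
Proof.
case=> linP P1 PM _; split => [c a b|//|a b]; first by rewrite linP tscale_twisted.
by rewrite PM (tmulmx_twisted f).
Qed.

Lemma der_twisted m n (A : {poly F} -> 'M[{poly K}]_m) (B : {poly F} -> 'M[{poly K}]_n) D :
  is_der f A B D -> der (tscalar f) A B (D : {poly F} -> 'M[twisted f]_(n, m)).
Proof.
case=> linD DM; split => [c a b|a b]; first by rewrite linD tscale_twisted.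
by rewrite DM !(tmulmx_twisted f).
Qed.

End Transfer.

Theorem theorem10p4 (F : finFieldType) (K : fieldType) (f : {rmorphism F -> K})
  (theta : K) (d e g : nat)
  (Phi : {poly F} -> 'M[{poly K}]_d) (Psi : {poly F} -> 'M[{poly K}]_e)
  (G : {poly F} -> 'M[{poly K}]_g) (delta : {poly F} -> 'M[{poly K}]_(e, d)) :
  is_tmodule f theta Phi -> is_tmodule f theta Psi -> is_tmodule f theta G ->
  is_der f Phi Psi delta ->
  let X := ext_tmod Phi Psi delta in
  let i := tincl K d e in
  let pi := tproj K d e in
  (* (i) *)
  exact_seq6 (HomSQ G Psi) (HomSQ G X) (HomSQ G Phi)
             (ExtSQ f G Psi) (ExtSQ f G X) (ExtSQ f G Phi)
    (fun h : 'M[{poly K}]_(e, g) => tmulmx F i h)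
    (fun h : 'M[{poly K}]_(d + e, g) => tmulmx F pi h)
    (fun h : 'M[{poly K}]_(d, g) => fun a => tmulmx F (delta a) h)
    (fun eta : {poly F} -> 'M[{poly K}]_(e, g) => fun a => - tmulmx F i (eta a))
    (fun eta : {poly F} -> 'M[{poly K}]_(d + e, g) => fun a => - tmulmx F pi (eta a))
  /\
  (* (ii) *)
  exact_seq6 (HomSQ Phi G) (HomSQ X G) (HomSQ Psi G)
             (ExtSQ f Phi G) (ExtSQ f X G) (ExtSQ f Psi G)
    (fun h : 'M[{poly K}]_(g, d) => tmulmx F h pi)
    (fun h : 'M[{poly K}]_(g, d + e) => tmulmx F h i)
    (fun h : 'M[{poly K}]_(g, e) => fun a => tmulmx F h (delta a))
    (fun eta : {poly F} -> 'M[{poly K}]_(g, d) => fun a => - tmulmx F (eta a) pi)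
    (fun eta : {poly F} -> 'M[{poly K}]_(g, d + e) => fun a => - tmulmx F (eta a) i).
Proof.
move=> /rep_twisted rPhi /rep_twisted rPsi /rep_twisted rG /der_twisted ddelta X i pi.
rewrite /HomSQ /ExtSQ /is_thom /is_der /is_inner !(tmulmx_twisted f) !tscale_twisted.
split.
- exact (exact_hom_ext_covariant (@tscalar_central _ _ f) rPhi rPsi rG ddelta).
- exact (exact_hom_ext_contravariant (@tscalar_central _ _ f) rPhi rPsi rG ddelta).
Qed.
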